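(* Let $r_1,r_2\ge 2$ and let $q_1,q_2\ge1$ be integers with $\gcd(q_1,r_2)=1$ and $\gcd(q_2,r_1)=1$. If $P=(P_1,P_2)=\sum_{\delta\in\mathbb{N}}(c_{1,\delta},c_{2,\delta})\binom{X}{\delta}\in(\mathbb{Z}_{r_1}\times\mathbb{Z}_{r_2})\binom{X}{\mathbb{Z}}$ is $q_1q_2$-periodic, then $$\check P:=(P_1(X_1),P_2(X_2))=\sum_{\delta}(c_{1,\delta},0)\binom{X_1}{\delta}+\sum_\delta(0,c_{2,\delta})\binom{X_2}{\delta}$$ is $(q_1,q_2)$-periodic, and $P\mapsto\check P$ is a ring isomorphism $$(\mathbb{Z}_{r_1}\times\mathbb{Z}_{r_2})\binom{X}{\mathbb{Z}_{q_1q_2}}\longrightarrow(\mathbb{Z}_{r_1}\times\mathbb{Z}_{r_2})\binom{X_1,X_2}{\mathbb{Z}_{q_1}\times\mathbb{Z}_{q_2}}$$ whose inverse is $Q\mapsto Q|_{X_1:=X,\,X_2:=X}$. If moreover $\gcd(q_1,q_2)=1$ and $\vartheta:\mathbb{Z}_{q_1q_2}\to\mathbb{Z}_{q_1}\times\mathbb{Z}_{q_2}$, $x+q_1q_2\mathbb{Z}\mapsto(x+q_1\mathbb{Z},x+q_2\mathbb{Z})$, then as maps $\check P=P\circ\vartheta^{-1}$ and $Q|_{X_1:=X,X_2:=X}=Q\circ\vartheta$.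
   Context: Notation: $\mathbb{Z}_r=\mathbb{Z}/r\mathbb{Z}$. $\binom{X}{\delta}=X(X-1)\cdots(X-\delta+1)/\delta!$, $\binom{X}{0}=1$. For $r\ge0$, $\mathbb{Z}\binom{X_1,\dots,X_n}{\mathbb{Z}^n}$ is the ring of integer linear combinations of products $\prod_j\binom{X_j}{\delta_j}$ (a subring of $\mathbb{Q}[X_1,\dots,X_n]$), and $\mathbb{Z}_r\binom{X_1,\dots,X_n}{\mathbb{Z}^n}$ is the quotient ring $\mathbb{Z}\binom{X_1,\dots,X_n}{\mathbb{Z}^n}/r\mathbb{Z}\binom{X_1,\dots,X_n}{\mathbb{Z}^n}$, i.e. formal sums $\sum_\delta P_\delta\prod_j\binom{X_j}{\delta_j}$ with $P_\delta\in\mathbb{Z}_r$, evaluated at integer points with values in $\mathbb{Z}_r$. For $B=\mathbb{Z}_{r_1}\times\mathbb{Z}_{r_2}$, $B$-polyfracts are pairs of such polyfracts with componentwise ring operations. For positive integers $q_j$, $B\binom{X_1,\dots,X_n}{\mathbb{Z}_{q_1}\times\cdots\times\mathbb{Z}_{q_n}}$ is the subring of those polyfracts whose evaluation map on $\mathbb{Z}^n$ is $q_j$-periodic in the $j$-th variable for each $j$ (such maps are identified with maps on $\mathbb{Z}_{q_1}\times\cdots\times\mathbb{Z}_{q_n}$). *)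

From HB Require Import structures.
From mathcomp Require Import all_boot all_order all_algebra.
Set Implicit Arguments. Unset Strict Implicit. Unset Printing Implicit Defensive.
Import Order.TTheory GRing.Theory Num.Theory.
Local Open Scope ring_scope.

Definition binz (x : int) (d : nat) : int :=
  ((\prod_(i < d) (x - (i : nat)%:Z)) %/ (d`!)%:Z)%Z.

Section Polyfracts.
Variable R : comNzRingType.

(* A one-variable polyfract  sum_d c_d binom(X,d)  with c_d in R is encoded by
   the polynomial  sum_d c_d 'X^d  (only the coefficient sequence is used; the
   {poly} multiplication is NOT the polyfract multiplication, see pf1_mul). *)
Definition pf1_eval (p : {poly R}) (x : int) : R :=
  \sum_(i < size p) p`_i * (binz x i)%:~R.

(* A two-variable polyfract  sum c_{d1,d2} binom(X1,d1) binom(X2,d2)  is encoded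
   by p : {poly {poly R}} with c_{d1,d2} = p`_d1`_d2. *)
Definition pf2_eval (p : {poly {poly R}}) (x1 x2 : int) : R :=
  \sum_(i < size p) \sum_(j < size (p`_i))
     (p`_i)`_j * (binz x1 i)%:~R * (binz x2 j)%:~R.

Definition msz (p : {poly {poly R}}) : nat := (\max_(i < size p) size (p`_i)%R)%N.

(* Newton (forward-difference) interpolation in the binomial basis: the
   binomial-basis coefficients of an integer-valued polynomial map f of degree
   < n are  c_d = sum_{k<=d} (-1)^(d-k) C(d,k) f(k). *)
Definition newton1 (f : int -> R) (n : nat) : {poly R} :=
  \poly_(d < n) \sum_(k < d.+1) ((-1) ^+ (d - k) *+ 'C(d, k)) * f (k : nat)%:Z.

Definition newton2 (f : int -> int -> R) (n m : nat) : {poly {poly R}} :=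
  \poly_(d1 < n) \poly_(d2 < m)
    \sum_(k1 < d1.+1) \sum_(k2 < d2.+1)
      ((-1) ^+ (d1 - k1) *+ 'C(d1, k1)) * ((-1) ^+ (d2 - k2) *+ 'C(d2, k2))
      * f (k1 : nat)%:Z (k2 : nat)%:Z.

(* Ring multiplication of polyfracts (product in Q[X] re-expanded in the
   binomial basis, reduced mod r), computed by Newton interpolation of the
   pointwise product; the degree of the product is at most the sum of degrees. *)
Definition pf1_mul (p q : {poly R}) : {poly R} :=
  newton1 (fun x => pf1_eval p x * pf1_eval q x) (size p + size q).-1.

Definition pf2_mul (p q : {poly {poly R}}) : {poly {poly R}} :=
  newton2 (fun x1 x2 => pf2_eval p x1 x2 * pf2_eval q x1 x2)
          (size p + size q).-1 (msz p + msz q).-1.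

(* Substitution X1 := X, X2 := X  (binom(X,i) binom(X,j) has degree i+j). *)
Definition pf2_diag (p : {poly {poly R}}) : {poly R} :=
  newton1 (fun x => pf2_eval p x x) (size p + msz p).-1.

Definition pf_in_X1 (p : {poly R}) : {poly {poly R}} := map_poly polyC p.
Definition pf_in_X2 (p : {poly R}) : {poly {poly R}} := p%:P.

End Polyfracts.

Definition PF1B (r1 r2 : nat) := ({poly 'Z_r1} * {poly 'Z_r2})%type.
Definition PF2B (r1 r2 : nat) := ({poly {poly 'Z_r1}} * {poly {poly 'Z_r2}})%type.

Definition evB1 r1 r2 (P : PF1B r1 r2) (x : int) : 'Z_r1 * 'Z_r2 :=
  (pf1_eval P.1 x, pf1_eval P.2 x).
Definition evB2 r1 r2 (P : PF2B r1 r2) (x1 x2 : int) : 'Z_r1 * 'Z_r2 :=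
  (pf2_eval P.1 x1 x2, pf2_eval P.2 x1 x2).

Definition addB1 r1 r2 (P Q : PF1B r1 r2) : PF1B r1 r2 := (P.1 + Q.1, P.2 + Q.2).
Definition addB2 r1 r2 (P Q : PF2B r1 r2) : PF2B r1 r2 := (P.1 + Q.1, P.2 + Q.2).
Definition mulB1 r1 r2 (P Q : PF1B r1 r2) : PF1B r1 r2 :=
  (pf1_mul P.1 Q.1, pf1_mul P.2 Q.2).
Definition mulB2 r1 r2 (P Q : PF2B r1 r2) : PF2B r1 r2 :=
  (pf2_mul P.1 Q.1, pf2_mul P.2 Q.2).
Definition oneB1 r1 r2 : PF1B r1 r2 := (1, 1).   (* binom(X,0) = 1 *)
Definition oneB2 r1 r2 : PF2B r1 r2 := (1, 1).

Definition periodicB1 r1 r2 (P : PF1B r1 r2) (q : nat) : Prop :=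
  forall x : int, evB1 P (x + q%:Z) = evB1 P x.
Definition periodicB2 r1 r2 (Q : PF2B r1 r2) (q1 q2 : nat) : Prop :=
  forall x1 x2 : int,
    evB2 Q (x1 + q1%:Z) x2 = evB2 Q x1 x2 /\ evB2 Q x1 (x2 + q2%:Z) = evB2 Q x1 x2.

Definition checkB r1 r2 (P : PF1B r1 r2) : PF2B r1 r2 :=
  (pf_in_X1 P.1, pf_in_X2 P.2).
Definition diagB r1 r2 (Q : PF2B r1 r2) : PF1B r1 r2 :=
  (pf2_diag Q.1, pf2_diag Q.2).

From HB Require Import structures.
From mathcomp Require Import all_boot all_order all_algebra.
From mathcomp Require Import ring.
Set Implicit Arguments. Unset Strict Implicit. Unset Printing Implicit Defensive.
Import Order.TTheory GRing.Theory Num.Theory.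
Local Open Scope ring_scope.

(* If a polyfract p has period a*b and b is a non-zero-divisor of the
   coefficient ring, then p has period a: the difference g = p(. + a) - p has
   lower degree and satisfies sum_(j < b) g(x + j a) = 0, so by induction on
   the degree g is a-periodic, hence b g = 0 and g = 0.  Since q2 is a unit
   of Z_r1 and q1 one of Z_r2, a q1q2-periodic P has P_1 of period q1 and P_2
   of period q2; symmetrically a (q1,q2)-periodic Q cannot depend on X_2 in
   its first component nor on X_1 in its second, i.e. Q = (Q_1(X_1), Q_2(X_2)).
   Polyfracts are determined by their values (Newton interpolation in the
   binomial basis), so P |-> check P and the diagonal substitution are
   mutually inverse and multiplicative; exchanging the variables (swapXY)
   reduces every statement about X_1 to the one about X_2. *)

Definition ffactz (x : int) (d : nat) : int := \prod_(i < d) (x - (i : nat)%:Z).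

Lemma ffactz_pascal x d : ffactz (x + 1) d.+1 = ffactz x d.+1 + d.+1%:Z * ffactz x d.
Proof.
have shift : ffactz (x + 1) d.+1 = (x + 1) * ffactz x d.
  rewrite /ffactz big_ord_recl subr0; congr (_ * _); apply: eq_bigr => i _.
  by rewrite /= /bump add1n -addn1 PoszD; ring.
by rewrite shift /ffactz big_ord_recr /= -/(ffactz x d) -addn1 PoszD; ring.
Qed.

Lemma dvdz_fact_ffactz x d : ((d`!)%:Z %| ffactz x d)%Z.
Proof.
elim: d x => [|d IHd] x; first by rewrite /ffactz big_ord0 dvdz1 fact0.
have dvd_step y : ((d.+1`!)%:Z %| d.+1%:Z * ffactz y d)%Z.
  by rewrite factS PoszM dvdz_mul.
elim/int_rect: x => [|n IHn|n IHn].
- by rewrite /ffactz big_ord_recl subr0 mul0r dvdz0.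
- by rewrite -addn1 PoszD ffactz_pascal rpredD.
- have shiftN : - n%:Z = - n.+1%:Z + 1 by rewrite -addn1 PoszD opprD addrNK.
  by move: IHn; rewrite shiftN ffactz_pascal rpredDr.
Qed.

Lemma binz_fact x d : binz x d * (d`!)%:Z = ffactz x d.
Proof. by rewrite divzK // dvdz_fact_ffactz. Qed.

Lemma binzS x d : binz (x + 1) d.+1 = binz x d.+1 + binz x d.
Proof.
apply: (@mulIf _ (d.+1`!)%:Z); first by rewrite eqz_nat -lt0n fact_gt0.
by rewrite mulrDl !binz_fact ffactz_pascal factS PoszM mulrCA binz_fact mulrC.
Qed.

Lemma binz0 x : binz x 0 = 1.
Proof. by rewrite /binz big_ord0 fact0 divz1. Qed.

Lemma binz0n d : binz 0 d.+1 = 0.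
Proof. by rewrite /binz big_ord_recl subr0 mul0r div0z. Qed.

Definition periodicz (T : Type) (f : int -> T) (a : int) := forall x, f (x + a) = f x.

Lemma periodicz_mull (T : Type) (f : int -> T) (a : int) :
  periodicz f a -> forall k : int, periodicz f (k * a).
Proof.
move=> fa; elim/int_rect=> [|n IHn|n IHn] x; first by rewrite mul0r addr0.
- by rewrite -addn1 PoszD mulrDl mul1r addrA fa.
- by rewrite -fa -[RHS]IHn; congr f; rewrite -addn1 PoszD; ring.
Qed.

Lemma periodicz_modz (T : Type) (f : int -> T) (a : int) :
  periodicz f a -> forall x y, (x = y %[mod a])%Z -> f x = f y.
Proof.
move=> fa x y xy; rewrite (divz_eq x a) (divz_eq y a) xy addrC periodicz_mull //.
by rewrite addrC periodicz_mull.
Qed.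

Lemma sumr_ord_widen (V : nmodType) n m (F : nat -> V) : (n <= m)%N ->
  (forall i, (n <= i)%N -> F i = 0) -> \sum_(i < n) F i = \sum_(i < m) F i.
Proof.
move=> le_n_m F0; rewrite (big_ord_widen _ F le_n_m) big_mkcond /=.
by apply: eq_bigr => i _; case: ltnP => // /F0.
Qed.

Section OneVariable.
Variable R : comNzRingType.
Implicit Types p q : {poly R}.

Lemma pf1_eval_widen p x m : (size p <= m)%N ->
  pf1_eval p x = \sum_(i < m) p`_i * (binz x i)%:~R.
Proof.
move=> le_p_m; rewrite /pf1_eval.
rewrite (@sumr_ord_widen _ _ _ (fun i => p`_i * (binz x i)%:~R) le_p_m) //.
by move=> i le_p_i; rewrite nth_default // mul0r.
Qed.

Lemma pf1_eval0 x : pf1_eval (0 : {poly R}) x = 0.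
Proof. by rewrite /pf1_eval size_poly0 big_ord0. Qed.

Lemma pf1_evalD p q x : pf1_eval (p + q) x = pf1_eval p x + pf1_eval q x.
Proof.
rewrite !(@pf1_eval_widen _ _ (maxn (size p) (size q))) ?leq_maxl ?leq_maxr //.
  by rewrite -big_split; apply: eq_bigr => i _; rewrite coefD mulrDl.
exact: size_polyD.
Qed.

Lemma pf1_eval_at0 p : pf1_eval p 0 = p`_0.
Proof.
rewrite (@pf1_eval_widen _ _ (size p).+1) // big_ord_recl binz0 mulr1 big1 ?addr0 //.
by move=> i _; rewrite binz0n mulr0.
Qed.

Definition pf1_delta p : {poly R} := \poly_(i < (size p).-1) p`_i.+1.

Lemma coef_pf1_delta p i : (pf1_delta p)`_i = p`_i.+1.
Proof.
rewrite coef_poly; case: ltnP => // le_p_i.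
by rewrite nth_default // (leq_trans (leqSpred _)).
Qed.

Lemma size_pf1_delta p : (size (pf1_delta p) <= (size p).-1)%N.
Proof. exact: size_poly. Qed.

Lemma pf1_eval_delta p x :
  pf1_eval p (x + 1) - pf1_eval p x = pf1_eval (pf1_delta p) x.
Proof.
have le_delta : (size (pf1_delta p) <= (size p).+1)%N.
  by rewrite (leq_trans (size_pf1_delta p)) // (leq_trans (leq_pred _)).
rewrite !(@pf1_eval_widen _ _ (size p).+1) // -sumrB big_ord_recl !binz0 subrr add0r.
rewrite big_ord_recr /= coef_pf1_delta nth_default // mul0r addr0.
by apply: eq_bigr => i _; rewrite coef_pf1_delta binzS intrD; ring.
Qed.

Lemma pf1_shift (a : nat) p :
  exists2 p' : {poly R}, (size p' <= size p)%N & forall x, pf1_eval p (x + a%:Z) = pf1_eval p' x.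
Proof.
elim: a => [|a [p' le_p' p'E]]; first by exists p => // x; rewrite addr0.
exists (p' + pf1_delta p').
  rewrite (leq_trans (size_polyD _ _)) // geq_max le_p'.
  by rewrite (leq_trans (size_pf1_delta _)) // (leq_trans (leq_pred _)).
move=> x; rewrite pf1_evalD -pf1_eval_delta [RHS]addrC subrK -p'E.
by rewrite -[a.+1]addn1 PoszD addrA (addrAC x).
Qed.

Lemma pf1_diff (a : nat) p : exists2 p' : {poly R}, (size p' <= (size p).-1)%N &
  forall x, pf1_eval p (x + a%:Z) - pf1_eval p x = pf1_eval p' x.
Proof.
elim: a => [|a [p' le_p' p'E]].
  by exists 0 => [|x]; rewrite ?size_poly0 // addr0 subrr pf1_eval0.
have [p'' le_p'' p''E] := pf1_shift a (pf1_delta p).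
exists (p'' + p').
  by rewrite (leq_trans (size_polyD _ _)) // geq_max le_p' (leq_trans le_p'') ?size_pf1_delta.
move=> x; rewrite pf1_evalD -p''E -p'E -pf1_eval_delta -addn1 PoszD addrA (addrAC x).
by rewrite addrA subrK.
Qed.

Section Periodicity.
Variables (a b : nat).
Hypothesis b_reg : GRing.lreg (b%:R : R).

Lemma pf1_eval_eq0_of_orbit_sum (g : {poly R}) :
  (forall x, \sum_(j < b) pf1_eval g (x + j%:Z * a%:Z) = 0) -> forall x, pf1_eval g x = 0.
Proof.
elim: {g}(size g) {-2}g (leqnn (size g)) => [|n IHn] g le_g_n orbit0 x.
  by move: le_g_n; rewrite leqn0 size_poly_eq0 => /eqP->; rewrite pf1_eval0.
have [h le_h hE] := pf1_diff a g.
have h0 : forall y, pf1_eval h y = 0.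
  apply: IHn; first by rewrite (leq_trans le_h) // -subn1 leq_subLR add1n.
  move=> y; under eq_bigr => j _ do rewrite -hE -addrA (addrC _ a%:Z) addrA.
  by rewrite sumrB orbit0 orbit0 subrr.
have g_per : periodicz (pf1_eval g) a%:Z.
  by move=> y; apply/eqP; rewrite -subr_eq0 hE h0.
apply: b_reg; rewrite mulr0 -[RHS](orbit0 x); under eq_bigr do rewrite periodicz_mull //.
by rewrite sumr_const card_ord mulr_natl.
Qed.

Lemma pf1_periodic_cancel p :
  periodicz (pf1_eval p) (a * b)%N%:Z -> periodicz (pf1_eval p) a%:Z.
Proof.
move=> p_ab x; have [g _ gE] := pf1_diff a p.
apply/eqP; rewrite -subr_eq0 gE; apply/eqP; apply: pf1_eval_eq0_of_orbit_sum => y.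
pose F j := pf1_eval p (y + j%:Z * a%:Z).
have telescope (j : 'I_b) : pf1_eval g (y + j%:Z * a%:Z) = F j.+1 - F j.
  by rewrite /F -gE -addrA -[j.+1]addn1 PoszD mulrDl mul1r.
rewrite (eq_bigr _ (fun j _ => telescope j)) -(big_mkord xpredT (fun j => F j.+1 - F j)).
by rewrite telescope_sumr // /F mul0r addr0 -PoszM mulnC p_ab subrr.
Qed.

End Periodicity.

Implicit Types f g : int -> R.

Definition newton_weight (d k : nat) : R := (-1) ^+ (d - k) *+ 'C(d, k).

Definition newton_coef (f : int -> R) (d : nat) : R :=
  \sum_(k < d.+1) newton_weight d k * f k%:Z.

Lemma coef_newton1 f n d : (newton1 f n)`_d = if (d < n)%N then newton_coef f d else 0.
Proof. exact: coef_poly. Qed.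

Lemma eq_newton_coef f g d : f =1 g -> newton_coef f d = newton_coef g d.
Proof. by move=> fg; apply: eq_bigr => k _; rewrite fg. Qed.

Lemma eq_newton1 f g n : f =1 g -> newton1 f n = newton1 g n.
Proof. by move=> fg; apply/polyP => d; rewrite !coef_newton1 (eq_newton_coef _ fg). Qed.

Lemma newton_weightS0 d : newton_weight d.+1 0 = - newton_weight d 0.
Proof. by rewrite /newton_weight !subn0 !bin0 exprS mulN1r. Qed.

Lemma newton_weightSS d k :
  newton_weight d.+1 k.+1 = newton_weight d k - newton_weight d k.+1.
Proof.
rewrite /newton_weight binS mulrnDr subSS; case: (ltnP k d) => [lt_k_d | le_d_k].
  have sgnS : (-1) ^+ (d - k.+1) = - (-1) ^+ (d - k) :> R.
    by rewrite -(subnSK lt_k_d) exprS mulN1r opprK.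
  by rewrite sgnS mulNrn opprK addrC.
by rewrite bin_small ?ltnS // !mulr0n add0r subr0.
Qed.

Lemma newton_coefS f d :
  newton_coef f d.+1 = newton_coef (fun x => f (x + 1) - f x) d.
Proof.
rewrite /newton_coef.
have shift : \sum_(k < d.+1) newton_weight d k * f k%:Z =
    newton_weight d 0 * f 0 + \sum_(k < d.+1) newton_weight d k.+1 * f k.+1%:Z.
  rewrite big_ord_recl; congr (_ + _).
  by rewrite [RHS]big_ord_recr /= {3}/newton_weight bin_small // mulr0n mul0r addr0.
under [RHS]eq_bigr => k _ do rewrite mulrBr -PoszD addn1.
rewrite sumrB shift big_ord_recl newton_weightS0.
under eq_bigr => k _ do rewrite lift0 newton_weightSS mulrBl.
by rewrite sumrB mulNr opprD addrC addrA [RHS]addrAC.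
Qed.

Lemma newton_coef_pf1_eval p d : newton_coef (pf1_eval p) d = p`_d.
Proof.
elim: d p => [|d IHd] p.
  by rewrite /newton_coef big_ord1 /newton_weight mulr1n mul1r pf1_eval_at0.
by rewrite newton_coefS (eq_newton_coef _ (pf1_eval_delta p)) IHd coef_pf1_delta.
Qed.

Lemma newton1_pf1_eval p n : (size p <= n)%N -> newton1 (pf1_eval p) n = p.
Proof.
move=> le_p_n; apply/polyP => d; rewrite coef_newton1 newton_coef_pf1_eval.
by case: ltnP => // /(leq_trans le_p_n) /(nth_default 0) ->.
Qed.

Lemma pf1_eval_inj p q : pf1_eval p =1 pf1_eval q -> p = q.
Proof.
move=> pq; rewrite -(@newton1_pf1_eval p (maxn (size p) (size q))) ?leq_maxl //.
by rewrite (eq_newton1 _ pq) newton1_pf1_eval ?leq_maxr.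
Qed.

Lemma newton1_eq0 f n : f =1 (fun=> 0) -> newton1 f n = 0.
Proof.
by move=> f0; rewrite (eq_newton1 _ f0) -(eq_newton1 _ pf1_eval0) newton1_pf1_eval ?size_poly0.
Qed.

Lemma pf1_periodic_const (b : nat) (g : {poly R}) : GRing.lreg (b%:R : R) ->
  periodicz (pf1_eval g) b%:Z -> g = (g`_0)%:P.
Proof.
move=> b_reg g_b; have g_1 : periodicz (pf1_eval g) 1.
  by apply: (@pf1_periodic_cancel 1 b b_reg); rewrite mul1n.
have delta0 : pf1_delta g = 0.
  by apply: pf1_eval_inj => x; rewrite -pf1_eval_delta g_1 subrr pf1_eval0.
apply/polyP => -[|i]; rewrite coefC //=.
by rewrite -coef_pf1_delta delta0 coef0.
Qed.

End OneVariable.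

Arguments newton_weight {R}.

Section TwoVariables.
Variable R : comNzRingType.
Implicit Types (p q : {poly R}) (P Q : {poly {poly R}}).

Lemma size_swapXY Q : size (swapXY Q) = msz Q.
Proof. by rewrite -sizeYE. Qed.

Lemma msz_swapXY Q : msz (swapXY Q) = size Q.
Proof. by rewrite -[msz _]/(sizeY _) sizeYE swapXYK. Qed.

Lemma pf2_eval_rows Q x1 x2 m : (size Q <= m)%N ->
  pf2_eval Q x1 x2 = \sum_(i < m) pf1_eval Q`_i x2 * (binz x1 i)%:~R.
Proof.
move=> le_Q_m.
rewrite -(@sumr_ord_widen _ _ _ (fun i => pf1_eval Q`_i x2 * (binz x1 i)%:~R) le_Q_m).
  apply: eq_bigr => i _; rewrite /pf1_eval mulr_suml.
  by apply: eq_bigr => j _; rewrite mulrAC.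
by move=> i le_Q_i; rewrite nth_default // pf1_eval0 mul0r.
Qed.

Lemma pf2_eval_widen Q x1 x2 m1 m2 : (size Q <= m1)%N -> (msz Q <= m2)%N ->
  pf2_eval Q x1 x2 = \sum_(i < m1) \sum_(j < m2)
    Q`_i`_j * (binz x1 i)%:~R * (binz x2 j)%:~R.
Proof.
move=> le_Q_m1 le_Q_m2; rewrite (pf2_eval_rows _ _ le_Q_m1); apply: eq_bigr => i _.
rewrite (@pf1_eval_widen _ _ _ m2) ?(leq_trans (max_size_coefXY Q i)) // mulr_suml.
by apply: eq_bigr => j _; rewrite mulrAC.
Qed.

Lemma pf2_eval_swapXY Q x1 x2 : pf2_eval (swapXY Q) x1 x2 = pf2_eval Q x2 x1.
Proof.
rewrite (@pf2_eval_widen _ _ _ (msz Q) (size Q)) ?size_swapXY ?msz_swapXY //.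
rewrite (@pf2_eval_widen _ _ _ (size Q) (msz Q)) // exchange_big /=.
by apply: eq_bigr => i _; apply: eq_bigr => j _; rewrite coef_swapXY mulrAC.
Qed.

Lemma pf2_eval_X2 p x1 x2 : pf2_eval (pf_in_X2 p) x1 x2 = pf1_eval p x2.
Proof.
by rewrite (@pf2_eval_rows _ _ _ 1) ?size_polyC ?leq_b1 // big_ord1 coefC binz0 mulr1.
Qed.

Lemma pf_in_X1_swapXY p : pf_in_X1 p = swapXY (pf_in_X2 p).
Proof. by rewrite swapXY_polyC. Qed.

Lemma pf2_eval_X1 p x1 x2 : pf2_eval (pf_in_X1 p) x1 x2 = pf1_eval p x1.
Proof. by rewrite pf_in_X1_swapXY pf2_eval_swapXY pf2_eval_X2. Qed.

Lemma size_X2 p : size (pf_in_X2 p) = (p != 0).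
Proof. exact: size_polyC. Qed.

Lemma msz_X2 p : msz (pf_in_X2 p) = size p.
Proof. by rewrite -size_swapXY -pf_in_X1_swapXY size_map_polyC. Qed.

Section Newton2.
Implicit Types f g : int -> int -> R.

Lemma coef2_newton2 f N M i j : (newton2 f N M)`_i`_j =
  if ((i < N) && (j < M))%N then \sum_(k1 < i.+1) \sum_(k2 < j.+1)
    newton_weight i k1 * newton_weight j k2 * f k1%:Z k2%:Z else 0.
Proof. by rewrite coef_poly; case: ltnP; rewrite ?coef0 // coef_poly. Qed.

Lemma eq_newton2 f g N M : f =2 g -> newton2 f N M = newton2 g N M.
Proof.
move=> fg; apply/polyP => i; apply/polyP => j; rewrite !coef2_newton2.
by case: ifP => // _; apply: eq_bigr => k1 _; apply: eq_bigr => k2 _; rewrite fg.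
Qed.

Lemma newton2_eq0 f N M : f =2 (fun _ _ => 0) -> newton2 f N M = 0.
Proof.
move=> f0; apply/polyP => i; apply/polyP => j; rewrite coef2_newton2 !coef0.
by case: ifP => // _; rewrite big1 // => k1 _; rewrite big1 // => k2 _; rewrite f0 mulr0.
Qed.

Lemma newton2_swapXY f N M :
  swapXY (newton2 f N M) = newton2 (fun x1 x2 => f x2 x1) M N.
Proof.
apply/polyP => i; apply/polyP => j; rewrite coef_swapXY !coef2_newton2 andbC.
case: ifP => // _; rewrite exchange_big /=.
by apply: eq_bigr => k1 _; apply: eq_bigr => k2 _; rewrite (mulrC (newton_weight j _)).
Qed.

Lemma newton2_X2 (g : int -> R) M :
  newton2 (fun _ x2 => g x2) 1 M = pf_in_X2 (newton1 g M).
Proof.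
apply/polyP => i; apply/polyP => j; rewrite coef2_newton2 coefC.
case: i => [|i] /=; last by rewrite coef0.
rewrite coef_newton1; case: ltnP => // _; rewrite big_ord1; apply: eq_bigr => k _.
by rewrite /newton_weight mulr1n mul1r.
Qed.

End Newton2.

Lemma pf1_mul_eq0 p q : (p == 0) || (q == 0) -> pf1_mul p q = 0.
Proof.
by case/orP=> /eqP->; apply: newton1_eq0 => x; rewrite pf1_eval0 ?mul0r ?mulr0.
Qed.

Lemma pf2_mul_eq0 P Q : (P == 0) || (Q == 0) -> pf2_mul P Q = 0.
Proof.
case/orP=> /eqP->; apply: newton2_eq0 => x1 x2.
  by rewrite /pf2_eval size_poly0 big_ord0 mul0r.
by rewrite /pf2_eval size_poly0 big_ord0 mulr0.
Qed.

Lemma pf2_mul_X2 p q : pf2_mul (pf_in_X2 p) (pf_in_X2 q) = pf_in_X2 (pf1_mul p q).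
Proof.
have [pq0 | ] := boolP ((p == 0) || (q == 0)).
  by rewrite pf1_mul_eq0 // pf2_mul_eq0 // /pf_in_X2 !polyC_eq0.
rewrite negb_or => /andP[p0 q0].
rewrite /pf2_mul !size_X2 !msz_X2 p0 q0 -newton2_X2.
by apply: eq_newton2 => x1 x2; rewrite !pf2_eval_X2.
Qed.

Lemma pf2_mul_swapXY P Q : pf2_mul (swapXY P) (swapXY Q) = swapXY (pf2_mul P Q).
Proof.
rewrite /pf2_mul newton2_swapXY !size_swapXY !msz_swapXY.
by apply: eq_newton2 => x1 x2; rewrite !pf2_eval_swapXY.
Qed.

Lemma pf2_mul_X1 p q : pf2_mul (pf_in_X1 p) (pf_in_X1 q) = pf_in_X1 (pf1_mul p q).
Proof. by rewrite !pf_in_X1_swapXY pf2_mul_swapXY pf2_mul_X2. Qed.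

Lemma pf2_diag_X2 p : pf2_diag (pf_in_X2 p) = p.
Proof.
rewrite /pf2_diag (eq_newton1 _ (fun x => pf2_eval_X2 p x x)) newton1_pf1_eval //.
by rewrite size_X2 msz_X2; case: eqP => [->|]; rewrite ?size_poly0.
Qed.

Lemma pf2_diag_swapXY Q : pf2_diag (swapXY Q) = pf2_diag Q.
Proof.
rewrite /pf2_diag size_swapXY msz_swapXY addnC.
by apply: eq_newton1 => x; rewrite pf2_eval_swapXY.
Qed.

Lemma pf2_diag_X1 p : pf2_diag (pf_in_X1 p) = p.
Proof. by rewrite pf_in_X1_swapXY pf2_diag_swapXY pf2_diag_X2. Qed.

Section PeriodicInOneVariable.
Variable b : nat.
Hypothesis b_reg : GRing.lreg (b%:R : R).

(* For fixed [x2], [x1 |-> Q(x1, x2)] is the one-variable polyfract with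
   coefficients [Q_i(x2)]; periodicity makes it constant, so every [Q_i] with
   [i > 0] vanishes at every point. *)
Lemma pf2_const_in_X1 Q :
  (forall x1 x2, pf2_eval Q (x1 + b%:Z) x2 = pf2_eval Q x1 x2) -> Q = pf_in_X2 Q`_0.
Proof.
move=> Q_b; pose row x2 := \poly_(i < size Q) pf1_eval Q`_i x2.
have rowE x1 x2 : pf2_eval Q x1 x2 = pf1_eval (row x2) x1.
  rewrite (pf2_eval_rows _ _ (leqnn _)) (pf1_eval_widen _ (size_poly _ _)).
  by apply: eq_bigr => i _; rewrite coef_poly ltn_ord.
have row_const x2 : row x2 = ((row x2)`_0)%:P.
  by apply: (pf1_periodic_const b_reg) => x1; rewrite -!rowE Q_b.
apply/polyP => -[|i]; rewrite /pf_in_X2 coefC //=.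
have [lt_iQ | ] := ltnP i.+1 (size Q); last by move/(nth_default 0).
apply: pf1_eval_inj => x2; rewrite pf1_eval0.
by have := congr1 (fun p => p`_i.+1) (row_const x2); rewrite coefC !coef_poly lt_iQ.
Qed.

Lemma pf2_const_in_X2 Q :
  (forall x1 x2, pf2_eval Q x1 (x2 + b%:Z) = pf2_eval Q x1 x2) ->
  Q = pf_in_X1 (swapXY Q)`_0.
Proof.
move=> Q_b; rewrite pf_in_X1_swapXY -(pf2_const_in_X1 (Q := swapXY Q)) ?swapXYK //.
by move=> x1 x2; rewrite !pf2_eval_swapXY Q_b.
Qed.

End PeriodicInOneVariable.

End TwoVariables.

Lemma lreg_Zp_nat (r b : nat) : (1 < r)%N -> coprime b r -> GRing.lreg (b%:R : 'Z_r).
Proof. by move=> lt1r b_r; apply: mulrI; rewrite unitZpE // coprime_sym. Qed.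

Lemma evB2_checkB r1 r2 (P : PF1B r1 r2) x1 x2 :
  evB2 (checkB P) x1 x2 = (pf1_eval P.1 x1, pf1_eval P.2 x2).
Proof. by rewrite /evB2 pf2_eval_X1 pf2_eval_X2. Qed.

Lemma checkB_add r1 r2 (P P' : PF1B r1 r2) :
  checkB (addB1 P P') = addB2 (checkB P) (checkB P').
Proof. by rewrite /checkB /pf_in_X1 /pf_in_X2 /= !raddfD. Qed.

Lemma checkB_mul r1 r2 (P P' : PF1B r1 r2) :
  checkB (mulB1 P P') = mulB2 (checkB P) (checkB P').
Proof. by rewrite /checkB /mulB2 /= pf2_mul_X1 pf2_mul_X2. Qed.

Lemma checkB_one r1 r2 : checkB (oneB1 r1 r2) = oneB2 r1 r2.
Proof. by rewrite /checkB /pf_in_X1 /pf_in_X2 /= rmorph1 polyC1. Qed.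

Lemma diagB_checkB r1 r2 (P : PF1B r1 r2) : diagB (checkB P) = P.
Proof. by case: P => p1 p2; rewrite /diagB pf2_diag_X1 pf2_diag_X2. Qed.

Section CoprimePeriods.
Variables r1 r2 q1 q2 : nat.
Hypotheses (lt1r1 : (1 < r1)%N) (lt1r2 : (1 < r2)%N).
Hypotheses (q1_r2 : coprime q1 r2) (q2_r1 : coprime q2 r1).
Implicit Types (P : PF1B r1 r2) (Q : PF2B r1 r2).

Definition periodic_split P :=
  periodicz (pf1_eval P.1) q1%:Z /\ periodicz (pf1_eval P.2) q2%:Z.

Lemma periodicB1_split P : periodicB1 P (q1 * q2) <-> periodic_split P.
Proof.
split=> [P_q | [P1_q1 P2_q2] x].
  split.
    by apply: (pf1_periodic_cancel (lreg_Zp_nat lt1r1 q2_r1)) => x; have [] := P_q x.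
  apply: (pf1_periodic_cancel (lreg_Zp_nat lt1r2 q1_r2)) => x.
  by rewrite mulnC; have [] := P_q x.
by rewrite /evB1 PoszM (periodicz_mull P2_q2) mulrC (periodicz_mull P1_q1).
Qed.

Lemma periodicB2_checkB P : periodicB2 (checkB P) q1 q2 <-> periodic_split P.
Proof.
split=> [Pc_q | [P1_q1 P2_q2] x1 x2]; last by rewrite !evB2_checkB P1_q1 P2_q2.
split=> x.
  by have [/(congr1 fst)] := Pc_q x 0; rewrite !evB2_checkB.
by have [_ /(congr1 snd)] := Pc_q 0 x; rewrite !evB2_checkB.
Qed.

Lemma periodicB2_checkB_diagB Q : periodicB2 Q q1 q2 -> checkB (diagB Q) = Q.
Proof.
case: Q => Q1 Q2 Q_q.
rewrite [Q1](pf2_const_in_X2 (lreg_Zp_nat lt1r1 q2_r1)); last first.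
  by move=> x1 x2; have [_ /(congr1 fst)] := Q_q x1 x2.
rewrite [Q2](pf2_const_in_X1 (lreg_Zp_nat lt1r2 q1_r2)); last first.
  by move=> x1 x2; have [/(congr1 snd)] := Q_q x1 x2.
by rewrite -[(pf_in_X1 _, pf_in_X2 _)]/(checkB (_, _)) diagB_checkB.
Qed.

End CoprimePeriods.

Theorem theorem3p16 (r1 r2 q1 q2 : nat) :
  (2 <= r1)%N -> (2 <= r2)%N -> (0 < q1)%N -> (0 < q2)%N ->
  coprime q1 r2 -> coprime q2 r1 ->
  (forall P : PF1B r1 r2, periodicB1 P (q1 * q2) -> periodicB2 (checkB P) q1 q2) /\
  (forall P P' : PF1B r1 r2, periodicB1 P (q1 * q2) -> periodicB1 P' (q1 * q2) ->
     checkB (addB1 P P') = addB2 (checkB P) (checkB P') /\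
     checkB (mulB1 P P') = mulB2 (checkB P) (checkB P')) /\
  checkB (oneB1 r1 r2) = oneB2 r1 r2 /\
  (forall P : PF1B r1 r2, periodicB1 P (q1 * q2) -> diagB (checkB P) = P) /\
  (forall Q : PF2B r1 r2, periodicB2 Q q1 q2 ->
     periodicB1 (diagB Q) (q1 * q2) /\ checkB (diagB Q) = Q) /\
  (coprime q1 q2 ->
     (forall P : PF1B r1 r2, periodicB1 P (q1 * q2) ->
        forall (x1 x2 y : int),
          (y = x1 %[mod q1%:Z])%Z -> (y = x2 %[mod q2%:Z])%Z ->
          evB2 (checkB P) x1 x2 = evB1 P y) /\
     (forall Q : PF2B r1 r2, periodicB2 Q q1 q2 ->
        forall (x x1 x2 : int),
          (x1 = x %[mod q1%:Z])%Z -> (x2 = x %[mod q2%:Z])%Z ->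
          evB1 (diagB Q) x = evB2 Q x1 x2)).
Proof.
move=> lt1r1 lt1r2 _ _ q1_r2 q2_r1.
have splitB1 := periodicB1_split lt1r1 lt1r2 q1_r2 q2_r1.
have splitB2 := @periodicB2_checkB r1 r2 q1 q2.
have checkB_diagB := periodicB2_checkB_diagB lt1r1 lt1r2 q1_r2 q2_r1.
have evB2_eq (P : PF1B r1 r2) x1 x2 y : periodic_split q1 q2 P ->
    (y = x1 %[mod q1%:Z])%Z -> (y = x2 %[mod q2%:Z])%Z -> evB2 (checkB P) x1 x2 = evB1 P y.
  case=> P1_q1 P2_q2 y_x1 y_x2.
  by rewrite evB2_checkB /evB1 (periodicz_modz P1_q1 y_x1) (periodicz_modz P2_q2 y_x2).
split=> [P /splitB1/splitB2 // |].
split=> [P P' _ _ |]; first by rewrite checkB_add checkB_mul.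
split; first exact: checkB_one.
split=> [P _ |]; first exact: diagB_checkB.
split=> [Q Q_q |]; first by rewrite splitB1 -splitB2 checkB_diagB.
(* The hypothesis gcd(q1, q2) = 1 only guarantees that the residues exist. *)
move=> _; split=> [P /splitB1 P_q x1 x2 y | Q Q_q x x1 x2 x1_x x2_x]; first exact: evB2_eq.
rewrite -[in RHS](checkB_diagB _ Q_q) (evB2_eq _ _ _ x _ (esym x1_x) (esym x2_x)) //.
by rewrite -splitB2 checkB_diagB.
Qed.
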